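(* The $C$-shaped supergrid graph $C(m,n;k,l;c,d)$ contains a Hamiltonian cycle if and only if neither $a=m-k=1$ nor there exists a vertex $w$ of $C(m,n;k,l;c,d)$ with $\deg(w)=1$.
   Context: A supergrid graph is a finite vertex-induced subgraph of the infinite graph on integer points of the plane in which two vertices are adjacent iff their x- and y-coordinates each differ by at most 1. $R(m,n)$ denotes the rectangular supergrid graph on vertices $(x,y)$ with $1\le x\le m$, $1\le y\le n$. The $C$-shaped supergrid graph $C(m,n;k,l;c,d)$ is obtained from $R(m,n)$ by removing a subgraph $R(k,l)$ starting at the node $(m,c+1)$, such that $R(m,n)$ and $R(k,l)$ share exactly one border side, where $m\ge 2$, $n\ge 3$, $k,l\ge 1$, $c\ge 1$, $d=n-l-c\ge 1$, and $a=m-k\ge 1$. *)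

From mathcomp Require Import all_boot.
Set Implicit Arguments. Unset Strict Implicit. Unset Printing Implicit Defensive.

Definition point := (nat * nat)%type.

Definition sg_adj (u v : point) : bool :=
  [&& u != v,
      (u.1 <= v.1.+1) && (v.1 <= u.1.+1) &
      (u.2 <= v.2.+1) && (v.2 <= u.2.+1)].

(* A (finite) supergrid graph given by its vertex list (assumed duplicate-free);
   edges are induced by sg_adj. *)
Definition degree (V : seq point) (w : point) : nat := count (sg_adj w) V.

Definition hamiltonian_cycle (V : seq point) (s : seq point) : Prop :=
  [/\ uniq s, perm_eq s V, 3 <= size s & cycle sg_adj s].

Definition has_hamiltonian_cycle (V : seq point) : Prop :=
  exists s, hamiltonian_cycle V s.

Definition in_rect (m n : nat) (p : point) : bool :=
  (1 <= p.1 <= m) && (1 <= p.2 <= n).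

(* Removed rectangle R(k,l) placed with corner node (m, c+1), sharing the
   right border side x = m of R(m,n): x in [m-k+1, m], y in [c+1, c+l]. *)
Definition in_removed (m k l c : nat) (p : point) : bool :=
  (m - k < p.1 <= m) && (c < p.2 <= c + l).

(* Vertex list of C(m,n;k,l;c,d) (d = n-l-c is determined). *)
Definition C_vertices (m n k l c : nat) : seq point :=
  [seq p <- [seq (x, y) | x <- iota 1 m, y <- iota 1 n]
     | ~~ in_removed m k l c p].

From mathcomp Require Import all_boot zify.
Set Implicit Arguments. Unset Strict Implicit. Unset Printing Implicit Defensive.

(* Necessity: in a Hamiltonian cycle every vertex has degree at least 2, and
   when a = 1 the vertex (1, c+1) is a cut vertex: the rest of the cycle is a
   path avoiding row c+1, so it cannot contain both (1, 1) and (1, n).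
   Sufficiency: a vertex of degree 1 can only be the corner (m, 1) (when c = 1
   and k >= 2) or (m, n) (when d = 1 and k >= 2).  Otherwise the cycle goes
   down column 1 and comes back from (2, 1) to (2, n) through a chain of
   rectangles, each crossed by a Hamiltonian path between two of its corners;
   such corner-to-corner paths exist in every supergrid rectangle (snakes,
   finished on the last two columns by a zigzag along diagonal edges). *)

Section HamiltonianPaths.
Variables (T : eqType) (e : rel T).

Definition ham_path (P : pred T) (a b : T) : Prop :=
  exists t, [/\ uniq (a :: t), forall p, (p \in a :: t) = P p,
                path e a t & last a t = b].

Lemma eq_ham_path P Q a b : P =1 Q -> ham_path P a b -> ham_path Q a b.
Proof. by move=> PQ [t [ut mt pt lt]]; exists t; split=> // p; rewrite mt PQ. Qed.

Lemma ham_path1 a : ham_path (pred1 a) a a.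
Proof. by exists [::]; split=> // p; rewrite inE. Qed.

Lemma cat_ham_path P Q a b c d :
  ham_path P a b -> ham_path Q c d -> (forall p, P p -> Q p -> False) -> e b c ->
  ham_path (predU P Q) a d.
Proof.
move=> [t1 [u1 m1 p1 l1]] [t2 [u2 m2 p2 l2]] PQ bc.
exists (t1 ++ c :: t2); rewrite -cat_cons; split.
- rewrite cat_uniq u1 u2 andbT; apply/hasPn => p; rewrite m2 => Qp.
  by rewrite m1; apply/negP => /PQ; apply.
- by move=> p; rewrite mem_cat m1 m2.
- by rewrite cat_path p1 /= l1 bc p2.
- by rewrite last_cat /= l2.
Qed.

Lemma rev_ham_path P a b : symmetric e -> ham_path P a b -> ham_path P b a.
Proof.
move=> e_sym [t [ut mt pt lt]].
have rev_at : b :: rev (belast a t) = rev (a :: t) by rewrite [a :: t]lastI rev_rcons lt.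
exists (rev (belast a t)); split.
- by rewrite rev_at rev_uniq.
- by move=> p; rewrite rev_at mem_rev mt.
- by rewrite -lt rev_path (eq_path (fun x y => e_sym y x)).
- by rewrite -[last _ _]/(last a (b :: rev (belast a t))) rev_at rev_cons last_rcons.
Qed.

Lemma map_ham_path f P a b : involutive f -> {homo f : x y / e x y} ->
  ham_path P a b -> ham_path (P \o f) (f a) (f b).
Proof.
move=> fK f_e [t [ut mt pt lt]]; exists (map f t); rewrite -map_cons; split.
- by rewrite (map_inj_uniq (inv_inj fK)).
- by move=> p; rewrite -{1}(fK p) (mem_map (inv_inj fK)) mt.
- by rewrite /= path_map (sub_path f_e).
- by rewrite /= last_map lt.
Qed.

End HamiltonianPaths.

Lemma sg_adjE x1 y1 x2 y2 : sg_adj (x1, y1) (x2, y2) =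
  [&& (x1 != x2) || (y1 != y2), (x1 <= x2.+1) && (x2 <= x1.+1) &
      (y1 <= y2.+1) && (y2 <= y1.+1)].
Proof. by rewrite /sg_adj xpair_eqE negb_and. Qed.

Lemma sg_adj_sym : symmetric sg_adj.
Proof. by move=> [x1 y1] [x2 y2]; rewrite !sg_adjE; lia. Qed.

Lemma sg_adj_swap : {homo swap_pair : u v / sg_adj u v}.
Proof. by move=> [x1 y1] [x2 y2]; rewrite !sg_adjE /=; lia. Qed.

Lemma mem_C_vertices m n k l c p : (p \in C_vertices m n k l c) =
  [&& 1 <= p.1 <= m, 1 <= p.2 <= n & ~~ ((m - k < p.1 <= m) && (c < p.2 <= c + l))].
Proof.
case: p => x y; rewrite mem_filter andbC [RHS]andbA; congr (_ && _).
apply/allpairsP/idP => [[[x' y'] /= [+ + [-> ->]]] | /= xy].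
  by rewrite !mem_iota; lia.
by exists (x, y); rewrite /= !mem_iota; split=> //; lia.
Qed.

Lemma uniq_C_vertices m n k l c : uniq (C_vertices m n k l c).
Proof.
apply/filter_uniq/allpairs_uniq; try exact: iota_uniq.
by move=> [? ?] [? ?] _ _ [-> ->].
Qed.

Definition rect x0 x1 y0 y1 : pred point :=
  fun p => (x0 <= p.1 <= x1) && (y0 <= p.2 <= y1).

Ltac grid_lia :=
  first [ by move=> *; rewrite sg_adjE; lia
        | by case=> ? ?; rewrite /rect /= ?inE ?mem_C_vertices ?xpair_eqE /=; lia ].

Lemma ham_path_rows (X : pred nat) s t y0 y1 :
  (forall y, ham_path sg_adj (fun p => X p.1 && (p.2 == y)) (s, y) (t, y)) ->
  (forall y, sg_adj (t, y) (s, y.+1)) -> y0 <= y1 ->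
  ham_path sg_adj (fun p => X p.1 && (y0 <= p.2 <= y1)) (s, y0) (t, y1).
Proof.
move=> row step /subnKC <-; elim: (y1 - y0) => [|h IH].
  by rewrite addn0; apply: eq_ham_path (row y0) => -[x y] /=; case: (X x); lia.
rewrite addnS; apply: eq_ham_path (cat_ham_path IH (row _) _ (step _)).
all: by move=> [x y] /=; case: (X x); lia.
Qed.

Lemma ham_path_column x y0 y1 : y0 <= y1 ->
  ham_path sg_adj (rect x x y0 y1) (x, y0) (x, y1).
Proof.
move=> hy; apply: eq_ham_path (ham_path_rows (X := pred1 x) _ _ hy); first grid_lia.
- by move=> y; apply: eq_ham_path (ham_path1 sg_adj _); grid_lia.
- grid_lia.
Qed.

Lemma ham_path_two_columns x x' y0 y1 : x' = x.+1 \/ x = x'.+1 -> y0 <= y1 ->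
  ham_path sg_adj (fun p => ((p.1 == x) || (p.1 == x')) && (y0 <= p.2 <= y1))
    (x, y0) (x', y1).
Proof.
move=> xx' hy; apply: (ham_path_rows (X := pred2 x x')) hy => [y|y]; last grid_lia.
by apply: eq_ham_path (cat_ham_path (ham_path1 sg_adj _) (ham_path1 sg_adj _) _ _); grid_lia.
Qed.

Lemma ham_path_rect_corners x0 x1 y0 y1 : x0 <= x1 -> y0 <= y1 ->
  [/\ ham_path sg_adj (rect x0 x1 y0 y1) (x0, y0) (x1, y1),
      ham_path sg_adj (rect x0 x1 y0 y1) (x0, y1) (x1, y0),
      x0 < x1 -> ham_path sg_adj (rect x0 x1 y0 y1) (x0, y0) (x1, y0) &
      x0 < x1 -> ham_path sg_adj (rect x0 x1 y0 y1) (x0, y1) (x1, y1)].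
Proof.
move=> /subnKC <- hy; move: (x1 - x0) => w; elim: w x0 => [|w IH] x0.
  rewrite addn0 ltnn; have up := ham_path_column x0 hy.
  by split=> //; apply: rev_ham_path sg_adj_sym up.
have := IH x0.+1; rewrite addSnnS => -[BT TB BB TT].
have up := ham_path_column x0 hy; have down := rev_ham_path sg_adj_sym up.
have glue u v u' v' : ham_path sg_adj (rect x0 x0 y0 y1) u v ->
    ham_path sg_adj (rect x0.+1 (x0 + w.+1) y0 y1) u' v' -> sg_adj v u' ->
    ham_path sg_adj (rect x0 (x0 + w.+1) y0 y1) u v'.
  by move=> P Q vu'; apply: eq_ham_path (cat_ham_path P Q _ vu'); grid_lia.
split=> [||_|_].
- have [->|w_gt0] := posnP w; last by apply: glue up (TT ltac:(lia)) _; grid_lia.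
  have zig := @ham_path_two_columns x0 x0.+1 _ _ (or_introl erefl) hy.
  by rewrite addn1; apply: eq_ham_path zig; grid_lia.
- have [->|w_gt0] := posnP w; last by apply: glue down (BB ltac:(lia)) _; grid_lia.
  have zig := @ham_path_two_columns x0.+1 x0 _ _ (or_intror erefl) hy.
  by rewrite addn1; apply: eq_ham_path (rev_ham_path sg_adj_sym zig); grid_lia.
- by apply: glue up TB _; grid_lia.
- by apply: glue down BT _; grid_lia.
Qed.

Section RectangleCorners.
Variables (x0 x1 y0 y1 : nat).

Lemma ham_path_rect_diag : x0 <= x1 -> y0 <= y1 ->
  ham_path sg_adj (rect x0 x1 y0 y1) (x0, y0) (x1, y1).
Proof. by move=> hx hy; case: (ham_path_rect_corners hx hy). Qed.

Lemma ham_path_rect_antidiag : x0 <= x1 -> y0 <= y1 ->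
  ham_path sg_adj (rect x0 x1 y0 y1) (x0, y1) (x1, y0).
Proof. by move=> hx hy; case: (ham_path_rect_corners hx hy). Qed.

Lemma ham_path_rect_bottom : x0 < x1 -> y0 <= y1 ->
  ham_path sg_adj (rect x0 x1 y0 y1) (x0, y0) (x1, y0).
Proof. by move=> hx hy; case: (ham_path_rect_corners (ltnW hx) hy) => _ _ + _; apply. Qed.

Lemma ham_path_rect_top : x0 < x1 -> y0 <= y1 ->
  ham_path sg_adj (rect x0 x1 y0 y1) (x0, y1) (x1, y1).
Proof. by move=> hx hy; case: (ham_path_rect_corners (ltnW hx) hy) => _ _ _; apply. Qed.

End RectangleCorners.

Lemma ham_path_rect_left x0 x1 y0 y1 : x0 <= x1 -> y0 < y1 ->
  ham_path sg_adj (rect x0 x1 y0 y1) (x0, y0) (x0, y1).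
Proof.
move=> hx hy; have := map_ham_path swap_pairK sg_adj_swap (ham_path_rect_bottom hy hx).
by apply: eq_ham_path; grid_lia.
Qed.

Lemma ham_path_rect_right x0 x1 y0 y1 : x0 <= x1 -> y0 < y1 ->
  ham_path sg_adj (rect x0 x1 y0 y1) (x1, y0) (x1, y1).
Proof.
move=> hx hy; have := map_ham_path swap_pairK sg_adj_swap (ham_path_rect_top hy hx).
by apply: eq_ham_path; grid_lia.
Qed.

Lemma hamiltonian_cycle_rot V s w : hamiltonian_cycle V s -> w \in V ->
  exists t, hamiltonian_cycle V (w :: t).
Proof.
move=> [us sV size_s cs] wV; have ws : w \in s by rewrite (perm_mem sV).
exists (drop (index w s).+1 s ++ take (index w s) s); rewrite -(rot_index ws).
by split; rewrite ?rot_uniq ?perm_rot ?size_rot ?rot_cycle.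
Qed.

Lemma hamiltonian_cycle_degree V s w : hamiltonian_cycle V s -> w \in V ->
  2 <= degree V w.
Proof.
move=> hs /(hamiltonian_cycle_rot hs) [[|x t] [_ tV size_t cyc]] //.
rewrite /degree -(permP tV) {tV}; case/lastP: t size_t cyc => [|r y] //= _.
rewrite rcons_path last_rcons => /and3P[wx _ yw].
by rewrite -cats1 count_cat /= wx sg_adj_sym yw; lia.
Qed.

Lemma degree_eq1 V w u : uniq V -> u \in V ->
  (forall p, p \in V -> sg_adj w p = (p == u)) -> degree V w = 1.
Proof. by move=> uV uin wV; rewrite /degree (eq_in_count wV) count_uniq_mem ?uin. Qed.

Lemma path_avoiding_row y x t : path sg_adj x t ->
  all (fun p => p.2 != y) (x :: t) -> {in x :: t, forall p, (p.2 < y) = (x.2 < y)}.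
Proof.
elim: t x => [|z t IH] x /=; first by move=> _ _ p; rewrite inE => /eqP ->.
move=> /andP[xz zt] /and3P[xy zy ty] p; rewrite inE => /predU1P[-> // | pzt].
have side : (z.2 < y) = (x.2 < y).
  by move: xz xy zy; case: x => ? ?; case: z {zt pzt} => ? ?; rewrite sg_adjE /=; lia.
by rewrite -side; apply: IH => //=; rewrite zy.
Qed.

Lemma C_thin_not_hamiltonian k l c n : 1 <= l -> 1 <= c -> c + l < n ->
  ~ has_hamiltonian_cycle (C_vertices (1 + k) n k l c).
Proof.
move=> hl hc hn [s hs]; set V := C_vertices _ _ _ _ _ in hs.
have cutV : (1, c.+1) \in V by rewrite mem_C_vertices /=; lia.
have [[|x t] [ut tV size_t cyc]] := hamiltonian_cycle_rot hs cutV => //.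
have mem_t q : q \in V -> q != (1, c.+1) -> q \in x :: t.
  by rewrite -(perm_mem tV) inE => /predU1P[-> /eqP|].
have off_row : all (fun p => p.2 != c.+1) (x :: t).
  apply/allP => q qt; have : q \in V by rewrite -(perm_mem tV) inE qt orbT.
  have : q != (1, c.+1) by move: ut => /andP[+ _]; apply: contraNneq => <-.
  by rewrite mem_C_vertices; case: q {qt} => ? ?; rewrite xpair_eqE /=; lia.
have xt : path sg_adj x t by move: cyc; rewrite /= rcons_path => /and3P[].
have side := path_avoiding_row xt off_row.
have [bottom top] : (1, 1) \in x :: t /\ (1, n) \in x :: t.
  by split; apply: mem_t; rewrite ?mem_C_vertices ?xpair_eqE /=; lia.
by have := side _ bottom; have := side _ top => /=; lia.
Qed.

Lemma C_corner_degree1 a k l c n : 2 <= k -> 1 <= l -> c + l < n ->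
  c = 1 \/ n = c + l + 1 ->
  exists w, w \in C_vertices (a + k) n k l c /\ degree (C_vertices (a + k) n k l c) w = 1.
Proof.
move=> hk hl hn corner; have uV := uniq_C_vertices (a + k) n k l c.
case: corner => [c1 | top].
- exists (a + k, 1); split; first by rewrite mem_C_vertices /=; lia.
  apply: (degree_eq1 (u := (a + k - 1, 1)) uV); first by rewrite mem_C_vertices /=; lia.
  by move=> [x y]; rewrite mem_C_vertices sg_adjE xpair_eqE /=; lia.
- exists (a + k, n); split; first by rewrite mem_C_vertices /=; lia.
  apply: (degree_eq1 (u := (a + k - 1, n)) uV); first by rewrite mem_C_vertices /=; lia.
  by move=> [x y]; rewrite mem_C_vertices sg_adjE xpair_eqE /=; lia.
Qed.

Lemma has_hamiltonian_cycle_of_ham_path (V : seq point) a b :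
  uniq V -> 3 <= size V -> ham_path sg_adj [pred p in V] a b -> sg_adj b a ->
  has_hamiltonian_cycle V.
Proof.
move=> uV sizeV [t [ut mt pt lt]] ba; exists (a :: t).
have aV : perm_eq (a :: t) V by apply: uniq_perm => // p; rewrite mt.
split=> //; first by rewrite (perm_size aV).
by rewrite /cycle rcons_path pt lt.
Qed.

Section Sufficiency.
Variables (a k l c n : nat).
Hypotheses (hk : 1 <= k) (hl : 1 <= l) (hc : 1 <= c) (hn : c + l < n).
Local Notation m := (a + k).
Local Notation V := (C_vertices m n k l c).

Lemma C_hamiltonian_of_ham_path : 1 <= a ->
  ham_path sg_adj [pred p | (p \in V) && (1 < p.1)] (2, 1) (2, n) ->
  has_hamiltonian_cycle V.
Proof.
move=> ha right_part.
have left_column := @ham_path_rect_antidiag 1 1 1 n (leqnn 1) ltac:(lia).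
apply: has_hamiltonian_cycle_of_ham_path (uniq_C_vertices _ _ _ _ _) _ _ _.
- have sub : {subset [:: (1, 1); (1, 2); (1, 3)] <= V}.
    by move=> p; rewrite mem_C_vertices !inE => /or3P[] /eqP-> /=; lia.
  exact: uniq_leq_size sub.
- by apply: eq_ham_path (cat_ham_path left_column right_part _ _); grid_lia.
- grid_lia.
Qed.

Lemma C_hamiltonian_a_ge3 : 3 <= a -> 2 <= c -> c + l + 2 <= n \/ k = 1 ->
  has_hamiltonian_cycle V.
Proof.
move=> ha hc2 top; apply: C_hamiltonian_of_ham_path; first lia.
have bottom := @ham_path_rect_left 2 m 1 c ltac:(lia) ltac:(lia).
have middle := @ham_path_rect_diag 2 a c.+1 (c + l) ltac:(lia) ltac:(lia).
have top_right : ham_path sg_adj (rect a.+1 m (c + l).+1 n) (a.+1, (c + l).+1) (a.+1, n).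
  case: top => [d2 | k1]; first by apply: ham_path_rect_left; lia.
  by rewrite k1 addn1; apply: ham_path_rect_diag; lia.
have top_left := @ham_path_rect_top 2 a (c + l).+1 n ltac:(lia) ltac:(lia).
apply: eq_ham_path (cat_ham_path (cat_ham_path (cat_ham_path bottom middle _ _)
  top_right _ _) (rev_ham_path sg_adj_sym top_left) _ _).
all: grid_lia.
Qed.

Lemma C_hamiltonian_a_eq2 : a = 2 -> 2 <= c -> c + l + 2 <= n ->
  has_hamiltonian_cycle V.
Proof.
move=> a2 hc2 hd2; apply: C_hamiltonian_of_ham_path; first lia.
have bottom := @ham_path_rect_left 2 m 1 c ltac:(lia) ltac:(lia).
have middle := @ham_path_rect_diag 2 a c.+1 (c + l) ltac:(lia) ltac:(lia).
have top := @ham_path_rect_left 2 m (c + l).+1 n ltac:(lia) ltac:(lia).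
apply: eq_ham_path (cat_ham_path (cat_ham_path bottom middle _ _) top _ _).
all: grid_lia.
Qed.

Lemma C_hamiltonian_k_eq1 : k = 1 -> 2 <= a -> 2 <= l \/ a = 2 ->
  has_hamiltonian_cycle V.
Proof.
move=> k1 ha middle_shape; apply: C_hamiltonian_of_ham_path; first lia.
have bottom := @ham_path_rect_diag 2 m 1 c ltac:(lia) ltac:(lia).
have middle : ham_path sg_adj (rect 2 a c.+1 (c + l)) (a, c.+1) (a, c + l).
  case: middle_shape => [l2 | a2]; first by apply: ham_path_rect_right; lia.
  by rewrite a2; apply: ham_path_rect_diag; lia.
have top := @ham_path_rect_antidiag 2 m (c + l).+1 n ltac:(lia) ltac:(lia).
apply: eq_ham_path (cat_ham_path (cat_ham_path bottom middle _ _)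
  (rev_ham_path sg_adj_sym top) _ _).
all: grid_lia.
Qed.

(* The one-row middle strip cannot be entered and left on the same side, so the
   cycle slips past the missing cell (m, 2) through (a, 2) and then covers
   columns m and a separately. *)
Lemma C_hamiltonian_k_l_c_eq1 : k = 1 -> l = 1 -> c = 1 -> 3 <= a ->
  has_hamiltonian_cycle V.
Proof.
move=> k1 l1 c1 ha; apply: C_hamiltonian_of_ham_path; first lia.
have bottom := @ham_path_rect_diag 2 m 1 1 ltac:(lia) ltac:(lia).
have right_column := @ham_path_rect_diag m m 3 n ltac:(lia) ltac:(lia).
have column_a := @ham_path_rect_antidiag a a 3 n ltac:(lia) ltac:(lia).
have rest := @ham_path_rect_antidiag 2 a.-1 2 n ltac:(lia) ltac:(lia).
apply: eq_ham_path (cat_ham_path (cat_ham_path (cat_ham_path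
  (cat_ham_path bottom (ham_path1 sg_adj (a, 2)) _ _) right_column _ _) column_a _ _)
  (rev_ham_path sg_adj_sym rest) _ _).
all: grid_lia.
Qed.

End Sufficiency.

Lemma C_hamiltonian a k l c n : 2 <= a -> 1 <= k -> 1 <= l -> 1 <= c -> c + l < n ->
  k = 1 \/ 2 <= c /\ c + l + 2 <= n -> has_hamiltonian_cycle (C_vertices (a + k) n k l c).
Proof.
move=> ha hk hl hc hn [k1 | [hc2 hd2]].
- have [l2_or_a2 | l1_a3] := boolP ((2 <= l) || (a == 2)).
    by apply: C_hamiltonian_k_eq1; lia.
  have [c1 | c2] := leqP c 1.
    by apply: C_hamiltonian_k_l_c_eq1; lia.
  by apply: C_hamiltonian_a_ge3; lia.
- have [a2 | a3] := leqP a 2.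
    by apply: C_hamiltonian_a_eq2; lia.
  by apply: C_hamiltonian_a_ge3; lia.
Qed.

Theorem theorem4 (m n k l c d : nat)
  (hm : 2 <= m) (hn : 3 <= n) (hk : 1 <= k) (hl : 1 <= l) (hc : 1 <= c)
  (hd : d = n - l - c) (hd1 : 1 <= d) (ha : 1 <= m - k) :
  has_hamiltonian_cycle (C_vertices m n k l c) <->
  (m - k <> 1 /\
   ~ (exists w, w \in C_vertices m n k l c /\
                degree (C_vertices m n k l c) w = 1)).
Proof.
have hcl : c + l < n by lia.
have [a ma] : exists a, m = a + k by exists (m - k); lia.
subst m; rewrite addnK in ha *; split.
- move=> ham; split.
    by move=> a1; subst a; apply: C_thin_not_hamiltonian ham.
  by move=> [w [wV]]; case: ham => s /hamiltonian_cycle_degree/(_ wV); lia.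
- move=> [a_ne1 no_degree1]; apply: C_hamiltonian => //; first lia.
  have [k1 | k2] := leqP k 1; [by left; lia | right].
  have corner := @C_corner_degree1 a k l c n k2 hl hcl.
  by split; rewrite leqNgt; apply/negP => h; apply: no_degree1; apply: corner; lia.
Qed.
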